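(* Let $\mathcal H$ be an abelian category in which subobjects of projective objects are projective, and let $\mathcal T\subseteq\mathcal H$ be a covariantly finite full subcategory consisting of projective objects, closed under finite direct sums and direct summands. The following are equivalent: (1) $\underline{\mathcal H}=\mathcal H/\langle\mathcal T\rangle$ is balanced; (2) ${}^\perp\mathcal T$ is closed under subobjects; (3) $({}^\perp\mathcal T,\operatorname{Sub}(\mathcal T))$ is a hereditary (split) torsion theory in $\mathcal H$. If moreover $\mathcal T$ is contravariantly finite, these are equivalent to: (4) $\underline{\mathcal H}$ is weakly balanced. If $\mathcal H$ has enough injectives, (1)–(3) are equivalent to: (5) for every $T\in\mathcal T$ there is a monomorphism $T\rightarrowtail E$ with $E\in\mathcal T$ an injective object of $\mathcal H$.
   Context: $\underline{\mathcal H}$ is the stable category (same objects, morphisms modulo those factoring through an object of $\mathcal T$). Balanced: every morphism that is both mono and epi is an isomorphism. When $\mathcal T$ is functorially finite, $\underline{\mathcal H}$ is pretriangulated (left triangles $\Omega Y\to Z\to X\xrightarrow{\overline f}Y$ with $\Omega Y=\ker$ of a $\mathcal T$-precover $p_Y$ and $Z$ the pullback of $f$ and $p_Y$; right triangles $X\xrightarrow{\overline f}Y\to W\to\Sigma X$ with $\Sigma X=\operatorname{cok}$ of a $\mathcal T$-preenvelope $\mu^X$ and $W$ the pushout of $f$ and $\mu^X$); $\overline f$ is a strong mono if there is a left triangle $\Omega Y\to0\to X\xrightarrow{\overline f}Y$, a strong epi if there is a right triangle $X\xrightarrow{\overline f}Y\to0\to\Sigma X$, and $\underline{\mathcal H}$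 is weakly balanced if every strong mono that is a strong epi is an isomorphism. $\operatorname{Sub}(\mathcal T)$: objects isomorphic to subobjects of objects of $\mathcal T$; ${}^\perp\mathcal T=\{X:\mathcal H(X,T)=0\ \forall T\in\mathcal T\}$. A torsion theory $(\mathcal U,\mathcal V)$: $\mathcal U^\perp=\mathcal V$, $\mathcal U={}^\perp\mathcal V$, and $\mathcal U\hookrightarrow\mathcal H$ has a right adjoint; it is hereditary if $\mathcal U$ is closed under subobjects, split if every object is a direct sum of an object of $\mathcal U$ and one of $\mathcal V$. *)

From HB Require Import structures.
From mathcomp Require Import all_boot all_algebra.
Set Implicit Arguments. Unset Strict Implicit. Unset Printing Implicit Defensive.
Import GRing.Theory.
Local Open Scope ring_scope.

Record PreCat := PreCatMk {
  Obj : Type;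
  Mor : Obj -> Obj -> zmodType;
  comp : forall X Y Z : Obj, Mor Y Z -> Mor X Y -> Mor X Z;  (* comp g f = g o f *)
  idm : forall X : Obj, Mor X X
}.
Arguments comp {p X Y Z} _ _.
Arguments idm {p} X.
Arguments Mor {p} X Y.

Section CatDefs.
Variable C : PreCat.
Notation Obj := (Obj C).

Definition mono {X Y : Obj} (f : Mor X Y) : Prop :=
  forall W (g h : Mor W X), comp f g = comp f h -> g = h.
Definition epi {X Y : Obj} (f : Mor X Y) : Prop :=
  forall W (g h : Mor Y W), comp g f = comp h f -> g = h.

Definition is_kernel {K X Y : Obj} (k : Mor K X) (f : Mor X Y) : Prop :=
  comp f k = 0 /\
  forall W (g : Mor W X), comp f g = 0 ->
    exists h : Mor W K, comp k h = g /\ forall h', comp k h' = g -> h' = h.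
Definition is_cokernel {X Y Q : Obj} (q : Mor Y Q) (f : Mor X Y) : Prop :=
  comp q f = 0 /\
  forall W (g : Mor Y W), comp g f = 0 ->
    exists h : Mor Q W, comp h q = g /\ forall h', comp h' q = g -> h' = h.

Definition is_biprod {A B P : Obj} (i1 : Mor A P) (i2 : Mor B P)
    (p1 : Mor P A) (p2 : Mor P B) : Prop :=
  [/\ comp p1 i1 = idm A, comp p2 i2 = idm B, comp p1 i2 = 0, comp p2 i1 = 0
    & comp i1 p1 + comp i2 p2 = idm P].

Definition is_pullback {X Y E Z : Obj} (f : Mor X Y) (g : Mor E Y)
    (z1 : Mor Z X) (z2 : Mor Z E) : Prop :=
  comp f z1 = comp g z2 /\
  forall W (a : Mor W X) (b : Mor W E), comp f a = comp g b ->
    exists h : Mor W Z, (comp z1 h = a /\ comp z2 h = b) /\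
      forall h', comp z1 h' = a /\ comp z2 h' = b -> h' = h.

Definition is_pushout {X Y E W : Obj} (f : Mor X Y) (g : Mor X E)
    (w1 : Mor Y W) (w2 : Mor E W) : Prop :=
  comp w1 f = comp w2 g /\
  forall V (a : Mor Y V) (b : Mor E V), comp a f = comp b g ->
    exists h : Mor W V, (comp h w1 = a /\ comp h w2 = b) /\
      forall h', comp h' w1 = a /\ comp h' w2 = b -> h' = h.

Definition projective (P : Obj) : Prop :=
  forall X Y (e : Mor X Y) (g : Mor P Y), epi e -> exists h : Mor P X, comp e h = g.
Definition injective (I : Obj) : Prop :=
  forall X Y (m : Mor X Y) (g : Mor X I), mono m -> exists h : Mor Y I, comp h m = g.

Definition enough_injectives : Prop :=
  forall X : Obj, exists I (m : Mor X I), injective I /\ mono m.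
End CatDefs.

Record is_abelian (C : PreCat) : Prop := {
  comp_assoc : forall (W X Y Z : Obj C) (h : Mor Y Z) (g : Mor X Y) (f : Mor W X),
      comp h (comp g f) = comp (comp h g) f;
  comp_id_l : forall (X Y : Obj C) (f : Mor X Y), comp (idm Y) f = f;
  comp_id_r : forall (X Y : Obj C) (f : Mor X Y), comp f (idm X) = f;
  comp_addl : forall (X Y Z : Obj C) (g1 g2 : Mor Y Z) (f : Mor X Y),
      comp (g1 + g2) f = comp g1 f + comp g2 f;
  comp_addr : forall (X Y Z : Obj C) (g : Mor Y Z) (f1 f2 : Mor X Y),
      comp g (f1 + f2) = comp g f1 + comp g f2;
  has_zero_obj : exists Z : Obj C, idm Z = 0;
  has_biprods : forall A B : Obj C, exists (P : Obj C) (i1 : Mor A P) (i2 : Mor B P)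
      (p1 : Mor P A) (p2 : Mor P B), is_biprod i1 i2 p1 p2;
  has_kernels : forall (X Y : Obj C) (f : Mor X Y),
      exists (K : Obj C) (k : Mor K X), is_kernel k f;
  has_cokernels : forall (X Y : Obj C) (f : Mor X Y),
      exists (Q : Obj C) (q : Mor Y Q), is_cokernel q f;
  mono_normal : forall (X Y : Obj C) (m : Mor X Y), mono m ->
      exists (Z : Obj C) (g : Mor Y Z), is_kernel m g;
  epi_normal : forall (X Y : Obj C) (e : Mor X Y), epi e ->
      exists (Z : Obj C) (g : Mor Z X), is_cokernel e g
}.

Section SubcatDefs.
Variable C : PreCat.
Notation Obj := (Obj C).
(* A full subcategory is given by a predicate on objects. *)
Variable T : Obj -> Prop.

Definition closed_finite_sums : Prop :=
  (forall Z : Obj, idm Z = 0 -> T Z) /\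
  (forall A B P (i1 : Mor A P) (i2 : Mor B P) (p1 : Mor P A) (p2 : Mor P B),
      is_biprod i1 i2 p1 p2 -> T A -> T B -> T P).

Definition closed_summands : Prop :=
  forall X Y (s : Mor Y X) (r : Mor X Y), comp r s = idm Y -> T X -> T Y.

Definition T_preenvelope {X E : Obj} (mu : Mor X E) : Prop :=
  T E /\ forall E' (g : Mor X E'), T E' -> exists h : Mor E E', comp h mu = g.
Definition T_precover {E Y : Obj} (p : Mor E Y) : Prop :=
  T E /\ forall E' (g : Mor E' Y), T E' -> exists h : Mor E' E, comp p h = g.

Definition covariantly_finite : Prop :=
  forall X : Obj, exists E (mu : Mor X E), T_preenvelope mu.
Definition contravariantly_finite : Prop :=
  forall Y : Obj, exists E (p : Mor E Y), T_precover p.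

(* ---- The stable category H/<T>: same objects, morphisms modulo those
   factoring through an object of T.  We work with representatives. *)
Definition factors_through_T {X Y : Obj} (f : Mor X Y) : Prop :=
  exists E (a : Mor X E) (b : Mor E Y), T E /\ f = comp b a.
Definition stable_eq {X Y : Obj} (f g : Mor X Y) : Prop :=
  factors_through_T (f - g).

Definition stable_mono {X Y : Obj} (f : Mor X Y) : Prop :=
  forall W (g h : Mor W X), stable_eq (comp f g) (comp f h) -> stable_eq g h.
Definition stable_epi {X Y : Obj} (f : Mor X Y) : Prop :=
  forall W (g h : Mor Y W), stable_eq (comp g f) (comp h f) -> stable_eq g h.
Definition stable_iso {X Y : Obj} (f : Mor X Y) : Prop :=
  exists g : Mor Y X, stable_eq (comp g f) (idm X) /\ stable_eq (comp f g) (idm Y).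
Definition stable_zero (Z : Obj) : Prop := stable_eq (idm Z) 0.

Definition stable_balanced : Prop :=
  forall X Y (f : Mor X Y), stable_mono f -> stable_epi f -> stable_iso f.

(* Strong mono: there is a left triangle  Omega Y -> 0 -> X -> Y, i.e. the
   pullback Z of f along a T-precover p_Y is zero in the stable category. *)
Definition strong_mono {X Y : Obj} (f : Mor X Y) : Prop :=
  exists E (p : Mor E Y) Z (z1 : Mor Z X) (z2 : Mor Z E),
    T_precover p /\ is_pullback f p z1 z2 /\ stable_zero Z.
(* Strong epi: there is a right triangle X -> Y -> 0 -> Sigma X, i.e. the
   pushout W of f along a T-preenvelope mu^X is zero in the stable category. *)
Definition strong_epi {X Y : Obj} (f : Mor X Y) : Prop :=
  exists E (mu : Mor X E) W (w1 : Mor Y W) (w2 : Mor E W),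
    T_preenvelope mu /\ is_pushout f mu w1 w2 /\ stable_zero W.

Definition weakly_balanced : Prop :=
  forall X Y (f : Mor X Y), strong_mono f -> strong_epi f -> stable_iso f.

Definition perpT (X : Obj) : Prop := forall E (f : Mor X E), T E -> f = 0.
Definition SubT (X : Obj) : Prop := exists E (m : Mor X E), T E /\ mono m.

Definition injective_mono_hull_in_T : Prop :=
  forall E : Obj, T E -> exists E' (m : Mor E E'), T E' /\ injective E' /\ mono m.
End SubcatDefs.

Section TorsionDefs.
Variable C : PreCat.
Notation Obj := (Obj C).

Definition closed_subobjects (U : Obj -> Prop) : Prop :=
  forall X Y (m : Mor X Y), mono m -> U Y -> U X.

(* (U, V) is a torsion theory: U^perp = V, U = ^perp V, and the inclusion
   U -> H has a right adjoint (every X has a U-coreflection). *)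
Definition torsion_theory (U V : Obj -> Prop) : Prop :=
  [/\ (forall Y, V Y <-> forall X (f : Mor X Y), U X -> f = 0),
      (forall X, U X <-> forall Y (f : Mor X Y), V Y -> f = 0)
    & (forall X : Obj, exists UX (eps : Mor UX X), U UX /\
         forall U' (g : Mor U' X), U U' ->
           exists h : Mor U' UX, comp eps h = g /\
             forall h', comp eps h' = g -> h' = h)].

Definition hereditary_torsion_theory (U V : Obj -> Prop) : Prop :=
  torsion_theory U V /\ closed_subobjects U.

Definition split_torsion_theory (U V : Obj -> Prop) : Prop :=
  torsion_theory U V /\
  forall X : Obj, exists A B (i1 : Mor A X) (i2 : Mor B X) (p1 : Mor X A) (p2 : Mor X B),
    U A /\ V B /\ is_biprod i1 i2 p1 p2.
End TorsionDefs.

(* Every object X splits as K (+) Q, where K, the kernel of a T-preenvelope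
   mu : X -> E, lies in ^perp T and the coimage Q of mu embeds in E, hence is
   projective.  So (^perp T, Sub T) is always a split torsion theory, and it is
   hereditary exactly when ^perp T is closed under subobjects.

   If ^perp T is closed under subobjects and f : X -> Y is stably mono and epi,
   then (f, -mu) : X -> Y (+) E is mono, and the cokernel of this map yields a
   stable right inverse of f.  If ^perp T is not closed under subobjects, a
   pushout produces a nonzero object E of T inside an object P of ^perp T; the
   cokernel of E -> P is then a strong mono and a strong epi of the stable
   category without being an isomorphism.  For (5), an injective object of
   Sub T is a summand of an object of T. *)

From Pilot Require Import Defs.
From mathcomp Require Import all_boot all_algebra.
Set Implicit Arguments. Unset Strict Implicit. Unset Printing Implicit Defensive.
Import GRing.Theory.
Local Open Scope ring_scope.

Local Notation "g ⊚ f" := (Defs.comp g f) (at level 40, left associativity).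

Section Abelian.
Variables (C : PreCat) (HC : is_abelian C).
Implicit Types X Y Z W : Obj C.

Lemma compmA W X Y Z (h : Mor Y Z) (g : Mor X Y) (f : Mor W X) :
  h ⊚ (g ⊚ f) = h ⊚ g ⊚ f.
Proof. exact: (comp_assoc HC h g f). Qed.

Lemma comp1l X Y (f : Mor X Y) : idm Y ⊚ f = f.
Proof. exact: (comp_id_l HC f). Qed.

Lemma comp1r X Y (f : Mor X Y) : f ⊚ idm X = f.
Proof. exact: (comp_id_r HC f). Qed.

Lemma compDl X Y Z (g1 g2 : Mor Y Z) (f : Mor X Y) :
  (g1 + g2) ⊚ f = g1 ⊚ f + g2 ⊚ f.
Proof. exact: (comp_addl HC g1 g2 f). Qed.

Lemma compDr X Y Z (g : Mor Y Z) (f1 f2 : Mor X Y) :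
  g ⊚ (f1 + f2) = g ⊚ f1 + g ⊚ f2.
Proof. exact: (comp_addr HC g f1 f2). Qed.

Lemma comp0l X Y Z (f : Mor X Y) : (0 : Mor Y Z) ⊚ f = 0.
Proof. by apply: (addrI (0 ⊚ f)); rewrite -compDl !addr0. Qed.

Lemma comp0r X Y Z (g : Mor Y Z) : g ⊚ (0 : Mor X Y) = 0.
Proof. by apply: (addrI (g ⊚ 0)); rewrite -compDr !addr0. Qed.

Lemma compNl X Y Z (g : Mor Y Z) (f : Mor X Y) : (- g) ⊚ f = - (g ⊚ f).
Proof. by apply/eqP; rewrite -addr_eq0 -compDl addNr comp0l. Qed.

Lemma compNr X Y Z (g : Mor Y Z) (f : Mor X Y) : g ⊚ (- f) = - (g ⊚ f).
Proof. by apply/eqP; rewrite -addr_eq0 -compDr addNr comp0r. Qed.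

Lemma compBl X Y Z (g1 g2 : Mor Y Z) (f : Mor X Y) :
  (g1 - g2) ⊚ f = g1 ⊚ f - g2 ⊚ f.
Proof. by rewrite compDl compNl. Qed.

Lemma compBr X Y Z (g : Mor Y Z) (f1 f2 : Mor X Y) :
  g ⊚ (f1 - f2) = g ⊚ f1 - g ⊚ f2.
Proof. by rewrite compDr compNr. Qed.

Lemma monoP X Y (m : Mor X Y) :
  mono m <-> forall W (g : Mor W X), m ⊚ g = 0 -> g = 0.
Proof.
split=> [Hm W g mg | H W g h mgh]; first by apply: Hm; rewrite mg comp0r.
by apply/eqP; rewrite -subr_eq0; apply/eqP/H; rewrite compBr mgh subrr.
Qed.

Lemma epiP X Y (e : Mor X Y) :
  epi e <-> forall W (g : Mor Y W), g ⊚ e = 0 -> g = 0.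
Proof.
split=> [He W g ge | H W g h ghe]; first by apply: He; rewrite ge comp0l.
by apply/eqP; rewrite -subr_eq0; apply/eqP/H; rewrite compBl ghe subrr.
Qed.

Lemma mono_eq0 X Y W (m : Mor X Y) (g : Mor W X) : mono m -> m ⊚ g = 0 -> g = 0.
Proof. by move/monoP; apply. Qed.

Lemma epi_eq0 X Y W (e : Mor X Y) (g : Mor Y W) : epi e -> g ⊚ e = 0 -> g = 0.
Proof. by move/epiP; apply. Qed.

Lemma mono_comp X Y Z (g : Mor Y Z) (f : Mor X Y) :
  mono g -> mono f -> mono (g ⊚ f).
Proof. by move=> Hg Hf W a b; rewrite -!compmA => /Hg /Hf. Qed.

Lemma epi_comp X Y Z (g : Mor Y Z) (f : Mor X Y) :
  epi g -> epi f -> epi (g ⊚ f).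
Proof. by move=> Hg Hf W a b; rewrite !compmA => /Hf /Hg. Qed.

Lemma mono_of_retraction X Y (m : Mor X Y) (r : Mor Y X) :
  r ⊚ m = idm X -> mono m.
Proof. by move=> rm W a b mab; rewrite -(comp1l a) -(comp1l b) -rm -!compmA mab. Qed.

Lemma epi_of_section X Y (e : Mor X Y) (s : Mor Y X) :
  e ⊚ s = idm Y -> epi e.
Proof. by move=> es W a b abe; rewrite -(comp1r a) -(comp1r b) -es !compmA abe. Qed.

Lemma from_zero_obj_eq0 X Y (f : Mor X Y) : idm X = 0 -> f = 0.
Proof. by move=> X0; rewrite -(comp1r f) X0 comp0r. Qed.

Lemma kernel_mono K X Y (k : Mor K X) (f : Mor X Y) : is_kernel k f -> mono k.
Proof.
move=> [fk Hk]; apply/monoP => W g kg.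
have fkg : f ⊚ (k ⊚ g) = 0 by rewrite compmA fk comp0l.
have [h [_ Uh]] := Hk W (k ⊚ g) fkg.
by rewrite (Uh g) // (Uh 0) // kg comp0r.
Qed.

Lemma cokernel_epi X Y Q (q : Mor Y Q) (f : Mor X Y) : is_cokernel q f -> epi q.
Proof.
move=> [qf Hq]; apply/epiP => W g gq.
have gqf : g ⊚ q ⊚ f = 0 by rewrite -compmA qf comp0r.
have [h [_ Uh]] := Hq W (g ⊚ q) gqf.
by rewrite (Uh g) // (Uh 0) // gq comp0l.
Qed.

Lemma cokernel_of_mono_exact X Y Q (v : Mor X Y) (p : Mor Y Q) :
  mono v -> is_cokernel p v ->
  forall W (x : Mor W Y), p ⊚ x = 0 -> exists t : Mor W X, x = v ⊚ t.
Proof.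
move=> Hv [pv Hp] W x px.
have [Z [g [gv Hg]]] := mono_normal HC Hv.
have [h [hp _]] := Hp Z g gv.
have gx : g ⊚ x = 0 by rewrite -hp -compmA px comp0r.
have [t [vt _]] := Hg W x gx.
by exists t.
Qed.

Lemma coimage_mono X E K Q (mu : Mor X E) (k : Mor K X) (q : Mor X Q) (m : Mor Q E) :
  is_kernel k mu -> is_cokernel q k -> mu = m ⊚ q -> mono m.
Proof.
move=> Hk Hq mu_mq; apply/monoP => W g mg.
have [V [c Hc]] := has_cokernels HC g.
have [m' [m'c _]] := Hc.2 E m mg.
have [Z [h Hh]] := epi_normal HC (epi_comp (cokernel_epi Hc) (cokernel_epi Hq)).
have muh : mu ⊚ h = 0 by rewrite mu_mq -m'c -!compmA (compmA c) Hh.1 comp0r.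
have [h' [kh' _]] := Hk.2 Z h muh.
have qh : q ⊚ h = 0 by rewrite -kh' compmA Hq.1 comp0l.
have [t [tcq _]] := Hh.2 Q q qh.
have tc : t ⊚ c = idm Q by apply: (cokernel_epi Hq); rewrite comp1l -compmA.
by rewrite -(comp1l g) -tc -compmA Hc.1 comp0r.
Qed.

Lemma biprod_proj_sub A B P X (i1 : Mor A P) (i2 : Mor B P) (p1 : Mor P A)
    (p2 : Mor P B) (f : Mor X A) (g : Mor X B) :
  is_biprod i1 i2 p1 p2 ->
  p1 ⊚ (i1 ⊚ f - i2 ⊚ g) = f /\ p2 ⊚ (i1 ⊚ f - i2 ⊚ g) = - g.
Proof.
case=> p1i1 p2i2 p1i2 p2i1 _.
by rewrite !compBr !compmA p1i1 p2i2 p1i2 p2i1 !comp1l !comp0l subr0 sub0r.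
Qed.

Lemma biprod_sub_eq0 A B P X W (i1 : Mor A P) (i2 : Mor B P) (p1 : Mor P A)
    (p2 : Mor P B) (f : Mor X A) (g : Mor X B) (x : Mor W X) :
  is_biprod i1 i2 p1 p2 -> (i1 ⊚ f - i2 ⊚ g) ⊚ x = 0 ->
  f ⊚ x = 0 /\ g ⊚ x = 0.
Proof.
move=> Hb phix; have [p1E p2E] := biprod_proj_sub f g Hb.
split; first by rewrite -p1E -compmA phix comp0r.
by apply/eqP; rewrite -oppr_eq0 -compNl -p2E -compmA phix comp0r.
Qed.

Lemma biprod_comp_sum A B P X Y (i1 : Mor A P) (i2 : Mor B P) (p1 : Mor P A)
    (p2 : Mor P B) (a : Mor X A) (c : Mor X B) (b : Mor A Y) (d : Mor B Y) :
  is_biprod i1 i2 p1 p2 -> (b ⊚ p1 + d ⊚ p2) ⊚ (i1 ⊚ a + i2 ⊚ c) = b ⊚ a + d ⊚ c.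
Proof.
case=> p1i1 p2i2 p1i2 p2i1 _.
rewrite compDl !compDr -!compmA ![p1 ⊚ (_ ⊚ _)]compmA ![p2 ⊚ (_ ⊚ _)]compmA.
by rewrite p1i1 p2i2 p1i2 p2i1 !comp0l !comp0r !comp1l addr0 add0r.
Qed.

Lemma cokernel_sub X Y Z (a b : Mor X Y) (c : Mor Y Z) :
  is_cokernel c (a - b) -> c ⊚ a = c ⊚ b.
Proof. by move=> [cab _]; apply/eqP; rewrite -subr_eq0 -compBr cab. Qed.

Lemma injective_retract I Q (s : Mor Q I) (r : Mor I Q) :
  @Defs.injective C I -> r ⊚ s = idm Q -> @Defs.injective C Q.
Proof.
move=> II rs A B a g am; have [h ha] := II A B a (s ⊚ g) am.
by exists (r ⊚ h); rewrite -compmA ha compmA rs comp1l.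
Qed.

Section StableCategory.
Variable T : Obj C -> Prop.
Hypothesis HTsums : closed_finite_sums T.

Lemma T_zero_obj : exists Z, idm Z = 0 /\ T Z.
Proof. by have [Z Z0] := has_zero_obj HC; exists Z; split; last exact: HTsums.1. Qed.

Lemma factorsT_comp X E Y (a : Mor X E) (b : Mor E Y) : T E ->
  factors_through_T T (b ⊚ a).
Proof. by move=> TE; exists E, a, b. Qed.

Lemma factorsT0 X Y : factors_through_T T (0 : Mor X Y).
Proof.
have [Z [_ TZ]] := T_zero_obj.
by rewrite -(comp0l Y (0 : Mor X Z)); apply: factorsT_comp.
Qed.

Lemma factorsT_compl X Y Z (g : Mor Y Z) (f : Mor X Y) :
  factors_through_T T f -> factors_through_T T (g ⊚ f).
Proof. by move=> [E [a [b [TE ->]]]]; rewrite compmA; apply: factorsT_comp. Qed.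

Lemma factorsT_compr X Y Z (g : Mor Y Z) (f : Mor X Y) :
  factors_through_T T g -> factors_through_T T (g ⊚ f).
Proof. by move=> [E [a [b [TE ->]]]]; rewrite -compmA; apply: factorsT_comp. Qed.

Lemma factorsTD X Y (f g : Mor X Y) :
  factors_through_T T f -> factors_through_T T g -> factors_through_T T (f + g).
Proof.
move=> [E [a [b [TE ->]]]] [E' [c [d [TE' ->]]]].
have [P [i1 [i2 [p1 [p2 Hb]]]]] := has_biprods HC E E'.
rewrite -(biprod_comp_sum a c b d Hb).
exact: factorsT_comp (HTsums.2 _ _ _ _ _ _ _ Hb TE TE').
Qed.

Lemma perpT_factorsT_eq0 X Y (f : Mor X Y) :
  perpT T X -> factors_through_T T f -> f = 0.
Proof. by move=> PX [E [a [b [TE ->]]]]; rewrite (PX E a TE) comp0r. Qed.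

Lemma stable_eq0P X Y (f : Mor X Y) : stable_eq T f 0 <-> factors_through_T T f.
Proof. by rewrite /stable_eq subr0. Qed.

Lemma stable_iso_of_mono_rinv X Y (f : Mor X Y) (t : Mor Y X) :
  stable_mono T f -> stable_eq T (f ⊚ t) (idm Y) -> stable_iso T f.
Proof.
move=> Hf ft1; exists t; split=> //; apply: Hf.
rewrite /stable_eq compmA comp1r -[X in _ - X](comp1l f) -compBl.
exact: factorsT_compr.
Qed.

Lemma SubT_closed_subobjects : closed_subobjects (SubT T).
Proof.
move=> X Y m mm [E [n [TE nm]]].
by exists E, (n ⊚ m); split=> //; exact: mono_comp.
Qed.

Lemma perpT_SubT_eq0 X Y (f : Mor X Y) : perpT T X -> SubT T Y -> f = 0.
Proof. by move=> PX [E [n [TE nm]]]; apply: (mono_eq0 nm); exact: PX. Qed.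

Lemma strong_epi_stable_epi X Y (f : Mor X Y) : strong_epi T f -> stable_epi T f.
Proof.
move=> [E [mu [W [w1 [w2 [[_ Hmu] [[_ Hpo] W0]]]]]]] Z g h [E' [a [b [TE' ab]]]].
have [a' a'mu] := Hmu E' a TE'.
have ghf : (g - h) ⊚ f = b ⊚ a' ⊚ mu by rewrite compBl ab -a'mu compmA.
have [w [[ww1 _] _]] := Hpo Z _ _ ghf.
rewrite /stable_eq -ww1 -[w1]comp1l compmA.
by apply/factorsT_compr/factorsT_compl; exact/stable_eq0P.
Qed.

Lemma strong_mono_stable_mono X Y (f : Mor X Y) : strong_mono T f -> stable_mono T f.
Proof.
move=> [E [q [Z [z1 [z2 [[_ Hq] [[_ Hpb] Z0]]]]]]] W g h [E' [a [b [TE' ab]]]].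
have [b' qb'] := Hq E' b TE'.
have fgh : f ⊚ (g - h) = q ⊚ (b' ⊚ a) by rewrite compBr ab compmA qb'.
have [z [[z1z _] _]] := Hpb W _ _ fgh.
rewrite /stable_eq -z1z -[z1]comp1r -compmA.
by apply/factorsT_compl/factorsT_compr; exact/stable_eq0P.
Qed.

Lemma weakly_balanced_of_stable_balanced : stable_balanced T -> weakly_balanced T.
Proof.
move=> Hbal X Y f Hm He; apply: Hbal.
  exact: strong_mono_stable_mono.
exact: strong_epi_stable_epi.
Qed.

Lemma closed_of_injective_hull :
  injective_mono_hull_in_T T -> closed_subobjects (perpT T).
Proof.
move=> Hhull X Y m mm PY E g TE.
have [I [n [TI [II nm]]]] := Hhull E TE.
have [h hm] := II X Y m (n ⊚ g) mm.
by apply: (mono_eq0 nm); rewrite -hm (PY I h TI) comp0l.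
Qed.

Definition T_epic X E (mu : Mor X E) : Prop :=
  forall E' (h : Mor E E'), T E' -> h ⊚ mu = 0 -> h = 0.

Section ProjectiveT.
Hypothesis Hsubproj :
  forall (P X : Obj C) (m : Mor X P), projective P -> mono m -> projective X.
Hypothesis HTproj : forall X, T X -> projective X.
Hypothesis HTsummands : closed_summands T.
Hypothesis HTcov : covariantly_finite T.

Lemma SubT_projective X : SubT T X -> projective X.
Proof. by move=> [E [m [TE mm]]]; exact: Hsubproj (HTproj TE) mm. Qed.

Lemma SubT_injective_T Q : SubT T Q -> Defs.injective Q -> T Q.
Proof.
move=> [E [m [TE mm]]] IQ; have [r rm] := IQ _ _ m (idm Q) mm.
exact: HTsummands rm TE.
Qed.

Lemma preenvelope_kernel_split X E K (mu : Mor X E) (k : Mor K X) :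
  T_preenvelope T mu -> is_kernel k mu ->
  exists Q (s : Mor Q X) (r : Mor X K) (q : Mor X Q),
    [/\ is_biprod k s r q, perpT T K & SubT T Q].
Proof.
move=> [TE Hmu] Hk.
have [Q [q Hq]] := has_cokernels HC k.
have [m [mq _]] := Hq.2 E mu Hk.1.
have SQ : SubT T Q by exists E, m; split=> //; exact: coimage_mono Hk Hq (esym mq).
have [s qs] := SubT_projective SQ (idm Q) (cokernel_epi Hq).
have mu_sq : mu ⊚ (idm X - s ⊚ q) = 0.
  by rewrite compBr comp1r -mq -!compmA (compmA q) qs comp1l subrr.
have [r [kr _]] := Hk.2 X _ mu_sq.
have km := kernel_mono Hk.
have rk : r ⊚ k = idm K.
  by apply: km; rewrite compmA kr compBl comp1l comp1r -compmA Hq.1 comp0r subr0.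
have rs : r ⊚ s = 0.
  by apply: (mono_eq0 km); rewrite compmA kr compBl comp1l -compmA qs comp1r subrr.
exists Q, s, r, q; split.
- by split=> //; [exact: Hq.1 | rewrite kr subrK].
- move=> E' g TE'; have [h hmu] := Hmu E' (g ⊚ r) TE'.
  by rewrite -(comp1r g) -rk compmA -hmu -compmA Hk.1 comp0r.
- exact: SQ.
Qed.

Lemma perpT_SubT_decomposition X :
  exists K Q (k : Mor K X) (s : Mor Q X) (r : Mor X K) (q : Mor X Q),
    [/\ is_biprod k s r q, perpT T K & SubT T Q].
Proof.
have [E [mu Hmu]] := HTcov X.
have [K [k Hk]] := has_kernels HC mu.
have [Q [s [r [q Hsplit]]]] := preenvelope_kernel_split Hmu Hk.
by exists K, Q, k, s, r, q.
Qed.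

Lemma perpT_SubT_torsion_theory : torsion_theory (perpT T) (SubT T).
Proof.
split=> [Y | X | X].
- split=> [SY X f PX | H]; first exact: perpT_SubT_eq0.
  have [K [Q [k [s [r [q [[_ _ _ _ ksrq] PK SQ]]]]]]] := perpT_SubT_decomposition Y.
  have sq : s ⊚ q = idm Y by rewrite -ksrq (H K k PK) comp0l add0r.
  exact: SubT_closed_subobjects (mono_of_retraction sq) SQ.
- split=> [PX Y f SY | H E f TE]; first exact: perpT_SubT_eq0.
  by apply: H; exists E, (idm E); split=> //; exact: mono_of_retraction (comp1l _).
- have [K [Q [k [s [r [q [[rk _ _ _ ksrq] PK SQ]]]]]]] := perpT_SubT_decomposition X.
  exists K, k; split=> // U g PU.
  have qg : q ⊚ g = 0 := perpT_SubT_eq0 (q ⊚ g) PU SQ.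
  exists (r ⊚ g); split=> [|h' <-]; last by rewrite compmA rk comp1l.
  by rewrite compmA -[RHS]comp1l -ksrq compDl -(compmA s) qg comp0r addr0.
Qed.

Lemma closed_perpT_hereditary_split :
  closed_subobjects (perpT T) <->
  hereditary_torsion_theory (perpT T) (SubT T) /\
  split_torsion_theory (perpT T) (SubT T).
Proof.
split=> [Hclosed | [[_ Hclosed] _] //].
split; split=> //; try exact: perpT_SubT_torsion_theory.
move=> X; have [K [Q [k [s [r [q [Hb PK SQ]]]]]]] := perpT_SubT_decomposition X.
by exists K, Q, k, s, r, q.
Qed.

Lemma stable_mono_preenvelope_jointly_mono X Y E (f : Mor X Y) (mu : Mor X E) :
  closed_subobjects (perpT T) -> stable_mono T f -> T_preenvelope T mu ->
  forall W (x : Mor W X), f ⊚ x = 0 -> mu ⊚ x = 0 -> x = 0.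
Proof.
move=> Hclosed Hf Hmu W x fx mux.
have [K [k Hk]] := has_kernels HC mu.
have [_ [_ [_ [_ [_ PK _]]]]] := preenvelope_kernel_split Hmu Hk.
have [y [ky _]] := Hk.2 W x mux.
have [L [l Hl]] := has_kernels HC (f ⊚ k).
have PL : perpT T L := Hclosed L K l (kernel_mono Hl) PK.
have fky : f ⊚ k ⊚ y = 0 by rewrite -compmA ky.
have [z [lz _]] := Hl.2 W y fky.
have kl0 : k ⊚ l = 0.
  apply: (perpT_factorsT_eq0 PL); apply/stable_eq0P; apply: Hf.
  by rewrite /stable_eq compmA Hl.1 comp0r subrr; exact: factorsT0.
by rewrite -ky -lz compmA kl0 comp0l.
Qed.

(* With [phi = (f, -mu) : X -> Y (+) E] and [c] its cokernel, [c i1 f = c i2 mu]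
   factors through [T], so [c i1] does; lifting that factorisation along [c]
   exhibits a stable right inverse of [f]. *)
Lemma stable_mono_epi_rinv X Y (f : Mor X Y) :
  closed_subobjects (perpT T) -> stable_mono T f -> stable_epi T f ->
  exists t : Mor Y X, stable_eq T (f ⊚ t) (idm Y).
Proof.
move=> Hclosed Hm He.
have [E [mu Hmu]] := HTcov X.
have [B [i1 [i2 [p1 [p2 Hb]]]]] := has_biprods HC Y E.
have [p1i1 _ _ _ _] := Hb.
have [p1phi _] := biprod_proj_sub f mu Hb.
have phim : mono (i1 ⊚ f - i2 ⊚ mu).
  apply/monoP => W x /(biprod_sub_eq0 Hb) [fx mux].
  exact: stable_mono_preenvelope_jointly_mono Hclosed Hm Hmu W x fx mux.
have [V [c Hc]] := has_cokernels HC (i1 ⊚ f - i2 ⊚ mu).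
have [E' [a [b [TE' ab]]]] : factors_through_T T (c ⊚ i1).
  apply/stable_eq0P; apply: He.
  rewrite /stable_eq comp0l subr0 -compmA (cokernel_sub Hc) compmA.
  exact: factorsT_comp Hmu.1.
have [b' cb'] := HTproj TE' b (cokernel_epi Hc).
have c_i1 : c ⊚ (i1 - b' ⊚ a) = 0 by rewrite compBr compmA cb' -ab subrr.
have [t i1t] := cokernel_of_mono_exact phim Hc c_i1.
exists t; rewrite /stable_eq.
have -> : f ⊚ t = idm Y - p1 ⊚ b' ⊚ a.
  by rewrite -p1phi -compmA -i1t compBr p1i1 compmA.
by rewrite addrAC subrr add0r -compNl; exact: factorsT_comp.
Qed.

Lemma stable_balanced_of_closed : closed_subobjects (perpT T) -> stable_balanced T.
Proof.
move=> Hclosed X Y f Hm He.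
have [t ft1] := stable_mono_epi_rinv Hclosed Hm He.
exact: stable_iso_of_mono_rinv Hm ft1.
Qed.

(* Split off the [perpT T] part of the cokernel of [f]; what remains of [E] is a
   summand [E1] through which [f] factors [T]-epically. *)
Lemma T_epic_of_nonzero X E (f : Mor X E) : T E -> f <> 0 ->
  exists E1 (mu : Mor X E1), [/\ T E1, mu <> 0 & T_epic mu].
Proof.
move=> TE f0.
have [V [c Hc]] := has_cokernels HC f.
have [K [Q [k [s [r [q [[_ qs _ _ ksrq] PK SQ]]]]]]] := perpT_SubT_decomposition V.
have qc_epi : epi (q ⊚ c) := epi_comp (epi_of_section qs) (cokernel_epi Hc).
have [s' qcs'] := SubT_projective SQ (idm Q) qc_epi.
have [E1 [k1 Hk1]] := has_kernels HC (q ⊚ c).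
have qc_s' : q ⊚ c ⊚ (idm E - s' ⊚ (q ⊚ c)) = 0.
  by rewrite compBr comp1r compmA qcs' comp1l subrr.
have [rho [k1rho _]] := Hk1.2 E _ qc_s'.
have rhok1 : rho ⊚ k1 = idm E1.
  apply: (kernel_mono Hk1).
  by rewrite compmA k1rho compBl comp1l comp1r -compmA Hk1.1 comp0r subr0.
exists E1, (rho ⊚ f); split; first exact: HTsummands rhok1 TE.
- move=> rhof0; apply: f0.
  have : k1 ⊚ (rho ⊚ f) = 0 by rewrite rhof0 comp0r.
  by rewrite compmA k1rho compBl comp1l -!compmA Hc.1 !comp0r subr0.
- move=> E' h TE' hrhof.
  have hrho_f : h ⊚ rho ⊚ f = 0 by rewrite -compmA.
  have [h' [h'c _]] := Hc.2 E' (h ⊚ rho) hrho_f.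
  have h'k : h' ⊚ k = 0 := PK E' _ TE'.
  have h'sq : h' = h' ⊚ s ⊚ q.
    by rewrite -{1}(comp1r h') -ksrq compDr compmA h'k comp0l add0r compmA.
  have hrho : h ⊚ rho = h' ⊚ s ⊚ (q ⊚ c) by rewrite -h'c {1}h'sq !compmA.
  by rewrite -(comp1r h) -rhok1 compmA hrho -compmA Hk1.1 comp0r.
Qed.

(* The pushout of [m] along a nonzero [T]-epic map out of [X] lies in [perpT T]
   and contains a nonzero object of [T]. *)
Lemma T_subobject_of_perpT X Y E (m : Mor X Y) (f : Mor X E) :
  mono m -> perpT T Y -> T E -> f <> 0 ->
  exists P E1 (v : Mor E1 P), [/\ perpT T P, T E1, mono v & idm E1 <> 0].
Proof.
move=> mm PY TE f0.
have [E1 [mu [TE1 mu0 Tepi]]] := T_epic_of_nonzero TE f0.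
have [B [i1 [i2 [p1 [p2 Hb]]]]] := has_biprods HC Y E1.
have [_ p2i2 p1i2 _ sumB] := Hb.
have phim : mono (i1 ⊚ m - i2 ⊚ mu).
  by apply/monoP => W x /(biprod_sub_eq0 Hb) [/(mono_eq0 mm)].
have [P [c Hc]] := has_cokernels HC (i1 ⊚ m - i2 ⊚ mu).
have cm := cokernel_sub Hc.
exists P, E1, (c ⊚ i2); split=> //.
- move=> E' h TE'.
  have hci1 : h ⊚ c ⊚ i1 = 0 := PY E' _ TE'.
  have hci2 : h ⊚ c ⊚ i2 = 0.
    by apply: (Tepi E' _ TE'); rewrite -!compmA -cm !compmA hci1 comp0l.
  apply: (epi_eq0 (cokernel_epi Hc)).
  by rewrite -(comp1r (h ⊚ c)) -sumB compDr !compmA hci1 hci2 !comp0l addr0.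
- apply/monoP => W x ci2x.
  have ci2x' : c ⊚ (i2 ⊚ x) = 0 by rewrite compmA.
  have [t i2x] := cokernel_of_mono_exact phim Hc ci2x'.
  have [p1phi _] := biprod_proj_sub m mu Hb.
  have mt : m ⊚ t = 0 by rewrite -p1phi -compmA -i2x compmA p1i2 comp0l.
  by rewrite -(comp1l x) -p2i2 -compmA i2x (mono_eq0 mm mt) !comp0r.
- by move=> E10; apply: mu0; rewrite -(comp1l mu) E10 comp0l.
Qed.

Lemma perpT_closed_of_T_subobjects_zero :
  (forall P E (v : Mor E P), perpT T P -> T E -> mono v -> idm E = 0) ->
  closed_subobjects (perpT T).
Proof.
move=> H0 X Y m mm PY E f TE; case: (eqVneq f 0) => // /eqP f0.
have [P [E1 [v [PP TE1 vm E10]]]] := T_subobject_of_perpT mm PY TE f0.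
by case: E10; exact: H0 PP TE1 vm.
Qed.

Section CokernelOfTSubobject.
Variables (P E D : Obj C) (v : Mor E P) (p : Mor P D).
Hypotheses (PP : perpT T P) (TE : T E) (vm : mono v) (Hp : is_cokernel p v).

Lemma cokernel_stable_iso_zero : stable_iso T p -> idm E = 0.
Proof.
move=> [g [gp _]].
have gp1 : g ⊚ p = idm P.
  by apply/eqP; rewrite -subr_eq0; apply/eqP; exact: perpT_factorsT_eq0 PP gp.
by apply: vm; rewrite comp1r comp0r -(comp1l v) -gp1 -compmA Hp.1 comp0r.
Qed.

Lemma cokernel_stable_epi : stable_epi T p.
Proof.
move=> W g h gph; rewrite /stable_eq.
have -> : g - h = 0.
  by apply: (epi_eq0 (cokernel_epi Hp)); rewrite compBl; exact: perpT_factorsT_eq0 PP gph.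
exact: factorsT0.
Qed.

Lemma cokernel_stable_mono : stable_mono T p.
Proof.
move=> W g h [E' [a [b [TE' ab]]]].
have [b' pb'] := HTproj TE' b (cokernel_epi Hp).
have pgh : p ⊚ (g - h - b' ⊚ a) = 0 by rewrite !compBr compmA pb' -ab subrr.
have [t ght] := cokernel_of_mono_exact vm Hp pgh.
rewrite /stable_eq (_ : g - h = b' ⊚ a + v ⊚ t); last by rewrite -ght [RHS]addrC subrK.
by apply: factorsTD; apply: factorsT_comp.
Qed.

(* Since [P] lies in [perpT T], the zero map to a zero object is a [T]-preenvelope. *)
Lemma cokernel_strong_epi : strong_epi T p.
Proof.
have [Z [Z0 TZ]] := T_zero_obj.
exists Z, 0, Z, 0, 0; split; last split.
- by split=> // E' g TE'; exists 0; rewrite comp0l (@PP E' g TE').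
- split; first by rewrite !comp0l.
  move=> V a b ab; exists 0; split=> [|h' _]; last exact: from_zero_obj_eq0 h' Z0.
  rewrite !comp0l (from_zero_obj_eq0 b Z0); split=> //; symmetry.
  by apply: (epi_eq0 (cokernel_epi Hp)); rewrite ab comp0r.
- by apply/stable_eq0P; rewrite Z0; exact: factorsT0.
Qed.

(* The pullback of [p] along a [T]-precover [pi] is [E (+) E'], with [E'] the
   source of [pi]. *)
Lemma cokernel_strong_mono : contravariantly_finite T -> strong_mono T p.
Proof.
move=> Hcf.
have [E' [pi Hpi]] := Hcf D; have [TE' _] := Hpi.
have [lam plam] := HTproj TE' pi (cokernel_epi Hp).
have [Z [b1 [b2 [a1 [a2 Hb]]]]] := has_biprods HC E E'.
have [_ a2b2 _ a2b1 sumZ] := Hb.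
exists E', pi, Z, (v ⊚ a1 + lam ⊚ a2), a2; split=> //; split.
- split; first by rewrite compDr !compmA Hp.1 plam comp0l add0r.
  move=> W al be albe.
  have pal : p ⊚ (al - lam ⊚ be) = 0 by rewrite compBr compmA plam albe subrr.
  have [ga alga] := cokernel_of_mono_exact vm Hp pal.
  exists (b1 ⊚ ga + b2 ⊚ be); split.
    rewrite (biprod_comp_sum ga be v lam Hb) -alga subrK; split=> //.
    by rewrite compDr !compmA a2b1 a2b2 comp0l comp1l add0r.
  move=> h' [z1h z2h].
  have a1h : a1 ⊚ h' = ga.
    by apply: vm; rewrite -alga -z1h -z2h compDl -!compmA addrK.
  by rewrite -(comp1l h') -sumZ compDl -!compmA a1h z2h.
- apply/stable_eq0P; rewrite -(comp1l (idm Z)).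
  exact: factorsT_comp (HTsums.2 _ _ _ _ _ _ _ Hb TE TE').
Qed.

End CokernelOfTSubobject.

Lemma closed_of_stable_balanced : stable_balanced T -> closed_subobjects (perpT T).
Proof.
move=> Hbal; apply: perpT_closed_of_T_subobjects_zero => P E v PP TE vm.
have [D [p Hp]] := has_cokernels HC v.
apply: (cokernel_stable_iso_zero PP vm Hp); apply: Hbal.
  exact: (cokernel_stable_mono TE vm Hp).
exact: (cokernel_stable_epi PP Hp).
Qed.

Lemma closed_of_weakly_balanced :
  contravariantly_finite T -> weakly_balanced T -> closed_subobjects (perpT T).
Proof.
move=> Hcf Hwbal; apply: perpT_closed_of_T_subobjects_zero => P E v PP TE vm.
have [D [p Hp]] := has_cokernels HC v.
apply: (cokernel_stable_iso_zero PP vm Hp); apply: Hwbal.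
  exact: (cokernel_strong_mono TE vm Hp Hcf).
exact: (cokernel_strong_epi PP Hp).
Qed.

(* [E] embeds in an injective [I = K (+) Q]; the summand [Q] is injective and in
   [Sub T], hence in [T], and [E -> Q] is mono because its kernel is a subobject
   of [K], so lies in [perpT T] and maps to zero in [E]. *)
Lemma injective_hull_of_closed :
  enough_injectives C -> closed_subobjects (perpT T) -> injective_mono_hull_in_T T.
Proof.
move=> Henough Hclosed E TE.
have [I [n [II nm]]] := Henough E.
have [K [Q [k [s [r [q [[_ qs _ _ ksrq] PK SQ]]]]]]] := perpT_SubT_decomposition I.
have IQ := injective_retract II qs.
exists Q, (q ⊚ n); split; first exact: SubT_injective_T.
split=> //.
have [L [l Hl]] := has_kernels HC (q ⊚ n).
have nl : n ⊚ l = k ⊚ (r ⊚ (n ⊚ l)).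
  by rewrite -[LHS]comp1l -ksrq compDl -!compmA (compmA q) Hl.1 comp0r addr0.
have rnl_mono : mono (r ⊚ (n ⊚ l)).
  apply/monoP => W y rnly; apply: (mono_eq0 (mono_comp nm (kernel_mono Hl))).
  by rewrite nl -compmA rnly comp0r.
have l0 : l = 0 := Hclosed _ _ _ rnl_mono PK E l TE.
apply/monoP => W x qnx; have [z [lz _]] := Hl.2 W x qnx.
by rewrite -lz l0 comp0l.
Qed.

End ProjectiveT.
End StableCategory.
End Abelian.

Theorem proposition5p6 (C : PreCat) (HC : is_abelian C)
  (Hsubproj : forall (P X : Obj C) (m : Mor X P), projective P -> mono m -> projective X)
  (T : Obj C -> Prop)
  (HTproj : forall X, T X -> projective X)
  (HTsums : closed_finite_sums T)
  (HTsummands : closed_summands T)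
  (HTcov : covariantly_finite T) :
  (stable_balanced T <-> closed_subobjects (perpT T)) /\
  (closed_subobjects (perpT T) <->
     (hereditary_torsion_theory (perpT T) (SubT T) /\
      split_torsion_theory (perpT T) (SubT T))) /\
  (contravariantly_finite T -> (stable_balanced T <-> weakly_balanced T)) /\
  (enough_injectives C -> (stable_balanced T <-> injective_mono_hull_in_T T)).
Proof.
have bal_closed := closed_of_stable_balanced HC HTsums Hsubproj HTproj HTsummands HTcov.
have closed_bal := stable_balanced_of_closed HC HTsums Hsubproj HTproj HTcov.
split; first by split.
split; first exact: (closed_perpT_hereditary_split HC Hsubproj HTproj HTcov).
split=> [Hcf | Henough].
  split; first exact: weakly_balanced_of_stable_balanced.
  move=> /(closed_of_weakly_balanced HC HTsums Hsubproj HTproj HTsummands HTcov Hcf).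
  exact: closed_bal.
split=> [/bal_closed | /(closed_of_injective_hull HC)]; last exact: closed_bal.
exact: (injective_hull_of_closed HC Hsubproj HTproj HTsummands HTcov Henough).
Qed.
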